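(* Let $a,b\in\mathrm{Im}(\mathbb{H})$ have norm one. Then $\mathbb{H}\times\mathbb{H}_{(T_{a,\bar a}\circ\sigma_{\mathbb{H}},\,T_{b,a})}$ is isomorphic to $\mathbb{H}\times\mathbb{H}_{(T_{i,\bar i}\circ\sigma_{\mathbb{H}},\,T_{i,i})}$.
   Context: For $a,b\in\mathbb{H}$, $T_{a,b}(x)=axb$ and $\sigma_{\mathbb{H}}(x)=\bar x$. On $\mathbb{H}\times\mathbb{H}$ the Cayley–Dickson product is $(x,y)\bullet(u,v)=(xu-\bar v y,\ y\bar u+vx)$; for linear maps $f,g$ of $\mathbb{H}$, $\mathbb{H}\times\mathbb{H}_{(f,g)}$ is $\mathbb{H}\times\mathbb{H}$ with product $(x,y)\odot(u,v)=(f(x),g(y))\bullet(u,v)$. *)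

From HB Require Import structures.
From mathcomp Require Import all_boot all_order all_algebra.
From mathcomp Require Import reals.
Set Implicit Arguments. Unset Strict Implicit. Unset Printing Implicit Defensive.
Import Order.TTheory GRing.Theory Num.Theory.
Local Open Scope ring_scope.

Section Quat.
Variable R : realType.

(** Quaternions x = q0 + q1 i + q2 j + q3 k. *)
Record quat := Quat { q0 : R; q1 : R; q2 : R; q3 : R }.

Definition qadd (x y : quat) : quat :=
  Quat (q0 x + q0 y) (q1 x + q1 y) (q2 x + q2 y) (q3 x + q3 y).
Definition qopp (x : quat) : quat := Quat (- q0 x) (- q1 x) (- q2 x) (- q3 x).
Definition qsub (x y : quat) : quat := qadd x (qopp y).
Definition qscale (c : R) (x : quat) : quat :=
  Quat (c * q0 x) (c * q1 x) (c * q2 x) (c * q3 x).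
(** Hamilton product, i^2 = j^2 = k^2 = ijk = -1. *)
Definition qmul (x y : quat) : quat :=
  Quat (q0 x * q0 y - q1 x * q1 y - q2 x * q2 y - q3 x * q3 y)
       (q0 x * q1 y + q1 x * q0 y + q2 x * q3 y - q3 x * q2 y)
       (q0 x * q2 y - q1 x * q3 y + q2 x * q0 y + q3 x * q1 y)
       (q0 x * q3 y + q1 x * q2 y - q2 x * q1 y + q3 x * q0 y).
Definition qconj (x : quat) : quat := Quat (q0 x) (- q1 x) (- q2 x) (- q3 x).
Definition qi : quat := Quat 0 1 0 0.

Definition is_imag (x : quat) : Prop := q0 x = 0.
Definition qnorm2 (x : quat) : R := q0 x ^+ 2 + q1 x ^+ 2 + q2 x ^+ 2 + q3 x ^+ 2.
Definition unit_norm (x : quat) : Prop := qnorm2 x = 1.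

Definition T (a b : quat) (x : quat) : quat := qmul (qmul a x) b.
Definition sigmaH (x : quat) : quat := qconj x.

Definition cd_mul (p q : quat * quat) : quat * quat :=
  let: (x, y) := p in let: (u, v) := q in
  (qsub (qmul x u) (qmul (qconj v) y), qadd (qmul y (qconj u)) (qmul v x)).

(** product of H x H_(f,g) *)
Definition cd_twisted_mul (f g : quat -> quat) (p q : quat * quat) : quat * quat :=
  cd_mul (f p.1, g p.2) q.

Definition padd (p q : quat * quat) : quat * quat := (qadd p.1 q.1, qadd p.2 q.2).
Definition pscale (c : R) (p : quat * quat) : quat * quat := (qscale c p.1, qscale c p.2).

Definition alg_iso (mul1 mul2 : quat * quat -> quat * quat -> quat * quat)
  (phi : quat * quat -> quat * quat) : Prop :=
  [/\ (forall p q, phi (padd p q) = padd (phi p) (phi q)),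
      (forall (c : R) p, phi (pscale c p) = pscale c (phi p)),
      bijective phi &
      (forall p q, phi (mul1 p q) = mul2 (phi p) (phi q))].

Definition alg_isomorphic (mul1 mul2 : quat * quat -> quat * quat -> quat * quat) : Prop :=
  exists phi, alg_iso mul1 mul2 phi.

End Quat.

(** Conjugation by unit quaternions p, q, namely (x, y) |-> (p x p', q y p')
    with p' the conjugate of p, is an automorphism of the Cayley–Dickson product
    on H x H; hence it transports the twist (f, g) to (P f P^-1, Q g Q^-1) where
    P x = p x p' and Q y = q y p'.  Every unit imaginary quaternion a is
    conjugate to i: since a^2 = -1, p := 1 - i a satisfies p a = i p (take
    p := j when a = -i), and p may be normalised.  Choosing p a = i p and
    q b = i q turns (T_{a,a'} sigma, T_{b,a}) into (T_{i,i'} sigma, T_{i,i}). *)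
From mathcomp Require Import all_boot all_order all_algebra reals.
From mathcomp Require Import ring lra.
Set Implicit Arguments. Unset Strict Implicit. Unset Printing Implicit Defensive.
Import Order.TTheory GRing.Theory Num.Theory.
Local Open Scope ring_scope.

Section Quaternions.
Variable R : realType.
Implicit Types (x y z u v p q r : quat R) (c : R).

Definition qone : quat R := Quat 1 0 0 0.
Definition qj : quat R := Quat 0 0 1 0.

Ltac quat_ring :=
  repeat match goal with x : quat _ |- _ => case: x => ? ? ? ? end;
  rewrite /qsub /qmul /qconj /qadd /qopp /qscale /qone /qi /=; congr Quat; ring.

Lemma qmulA x y z : qmul x (qmul y z) = qmul (qmul x y) z. Proof. quat_ring. Qed.
Lemma qmul1q x : qmul qone x = x. Proof. quat_ring. Qed.
Lemma qmulq1 x : qmul x qone = x. Proof. quat_ring. Qed.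
Lemma qmulDl x y z : qmul (qadd x y) z = qadd (qmul x z) (qmul y z). Proof. quat_ring. Qed.
Lemma qmulDr x y z : qmul x (qadd y z) = qadd (qmul x y) (qmul x z). Proof. quat_ring. Qed.
Lemma qmulBl x y z : qmul (qsub x y) z = qsub (qmul x z) (qmul y z). Proof. quat_ring. Qed.
Lemma qmulBr x y z : qmul x (qsub y z) = qsub (qmul x y) (qmul x z). Proof. quat_ring. Qed.
Lemma qmulZl c x y : qmul (qscale c x) y = qscale c (qmul x y). Proof. quat_ring. Qed.
Lemma qmulZr c x y : qmul x (qscale c y) = qscale c (qmul x y). Proof. quat_ring. Qed.
Lemma qconjK x : qconj (qconj x) = x. Proof. quat_ring. Qed.
Lemma qconjM x y : qconj (qmul x y) = qmul (qconj y) (qconj x). Proof. quat_ring. Qed.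

Lemma qnorm2Z c x : qnorm2 (qscale c x) = c ^+ 2 * qnorm2 x.
Proof. by case: x => ? ? ? ?; rewrite /qnorm2 /qscale /=; ring. Qed.

Lemma unit_norm_normalize x : 0 < qnorm2 x ->
  unit_norm (qscale (Num.sqrt (qnorm2 x))^-1 x).
Proof.
move=> x_gt0; rewrite /unit_norm qnorm2Z exprVn sqr_sqrtr ?ltW //.
by rewrite mulVf // gt_eqF.
Qed.

Lemma unit_conj_mulq p : unit_norm p -> qmul (qconj p) p = qone.
Proof.
case: p => ? ? ? ?; rewrite /unit_norm /qnorm2 /= => n1.
by rewrite /qmul /qconj /qone /=; congr Quat; rewrite -?n1; ring.
Qed.

Lemma unit_mulq_conj p : unit_norm p -> qmul p (qconj p) = qone.
Proof.
case: p => ? ? ? ?; rewrite /unit_norm /qnorm2 /= => n1.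
by rewrite /qmul /qconj /qone /=; congr Quat; rewrite -?n1; ring.
Qed.

Lemma imag_unit_sqr a : is_imag a -> unit_norm a -> qmul a a = qopp qone.
Proof.
case: a => a0 ? ? ?; rewrite /is_imag /unit_norm /qnorm2 /= => -> n1.
by rewrite /qmul /qopp /qone /=; congr Quat; rewrite -?n1; ring.
Qed.

Lemma imag_unit_conj_qi a : is_imag a -> unit_norm a ->
  exists2 p, unit_norm p & qmul p a = qmul (qi R) p.
Proof.
move=> a_im a_unit; set p0 := qsub qone (qmul (qi R) a).
have p0a : qmul p0 a = qmul (qi R) p0.
  rewrite /p0 qmulBl qmulBr qmul1q qmulq1 -qmulA imag_unit_sqr //.
  clear p0 a_unit; move: a_im; case: a => ? ? ? ?; rewrite /is_imag /= => ->.
  quat_ring.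
have [p0_gt0 | ] := ltP 0 (qnorm2 p0).
  exists (qscale (Num.sqrt (qnorm2 p0))^-1 p0); first exact: unit_norm_normalize.
  by rewrite qmulZl qmulZr p0a.
move: a_im a_unit @p0 p0a; case: a => a0 a1 a2 a3.
rewrite /is_imag /unit_norm /qnorm2 /= => -> n1 _.
rewrite /qsub /qmul /qadd /qopp /qi /= => p0_le0.
have a1E : a1 = -1 by nra.
have [a2E a3E] : a2 = 0 /\ a3 = 0 by split; nra.
exists qj; first by rewrite /unit_norm /qnorm2 /=; ring.
by rewrite a1E a2E a3E /qmul /=; congr Quat; ring.
Qed.

Lemma T_conj p q x : qconj (T p q x) = T (qconj q) (qconj p) (qconj x).
Proof. by rewrite /T !qconjM qmulA. Qed.

Lemma T_mul p q r x y : unit_norm q ->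
  qmul (T p (qconj q) x) (T q (qconj r) y) = T p (qconj r) (qmul x y).
Proof.
move=> q_unit; rewrite /T !qmulA -[qmul (qmul (qmul p x) _) q]qmulA.
by rewrite unit_conj_mulq // qmulq1.
Qed.

Lemma T_add p q x y : T p q (qadd x y) = qadd (T p q x) (T p q y).
Proof. by rewrite /T qmulDr qmulDl. Qed.

Lemma T_sub p q x y : T p q (qsub x y) = qsub (T p q x) (T p q y).
Proof. by rewrite /T qmulBr qmulBl. Qed.

Lemma T_scale p q c x : T p q (qscale c x) = qscale c (T p q x).
Proof. by rewrite /T qmulZr qmulZl. Qed.

Lemma T_unitK p q : unit_norm p -> unit_norm q ->
  cancel (T p (qconj q)) (T (qconj p) q).
Proof.
move=> p_unit q_unit x; rewrite /T !qmulA unit_conj_mulq // qmul1q.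
by rewrite -qmulA unit_conj_mulq // qmulq1.
Qed.

Lemma T_unitKV p q : unit_norm p -> unit_norm q ->
  cancel (T (qconj p) q) (T p (qconj q)).
Proof.
move=> p_unit q_unit x; rewrite /T !qmulA unit_mulq_conj // qmul1q.
by rewrite -qmulA unit_mulq_conj // qmulq1.
Qed.

Section CayleyDicksonRotation.
Variables p q : quat R.
Hypotheses (p_unit : unit_norm p) (q_unit : unit_norm q).

Definition cd_rot (X : quat R * quat R) : quat R * quat R :=
  (T p (qconj p) X.1, T q (qconj p) X.2).

Lemma cd_rotM X Y : cd_rot (cd_mul X Y) = cd_mul (cd_rot X) (cd_rot Y).
Proof.
case: X Y => x y [u v]; rewrite /cd_rot /cd_mul /=; congr pair.
- by rewrite T_sub T_conj qconjK !T_mul.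
- by rewrite T_add T_conj qconjK !T_mul.
Qed.

Lemma cd_rot_twisted_iso f g f' g' :
  (forall x, T p (qconj p) (f x) = f' (T p (qconj p) x)) ->
  (forall y, T q (qconj p) (g y) = g' (T q (qconj p) y)) ->
  alg_iso (cd_twisted_mul f g) (cd_twisted_mul f' g') cd_rot.
Proof.
move=> fE gE; split.
- by move=> [x y] [u v]; rewrite /cd_rot /padd /= !T_add.
- by move=> c [x y]; rewrite /cd_rot /pscale /= !T_scale.
- exists (fun X => (T (qconj p) p X.1, T (qconj q) p X.2));
    move=> [x y]; rewrite /cd_rot /=.
  + by rewrite !T_unitK.
  + by rewrite !T_unitKV.
- by move=> [x y] Y; rewrite /cd_twisted_mul cd_rotM /cd_rot /= fE gE.
Qed.

End CayleyDicksonRotation.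

Section Intertwining.
Variables a p : quat R.
Hypotheses (p_unit : unit_norm p) (pa : qmul p a = qmul (qi R) p).

Lemma T_conj_intertwine x :
  T p (qconj p) (T a (qconj a) (sigmaH x))
  = T (qi R) (qconj (qi R)) (sigmaH (T p (qconj p) x)).
Proof.
have apE : qmul (qconj a) (qconj p) = qmul (qconj p) (qconj (qi R)).
  by rewrite -!qconjM pa.
by rewrite /sigmaH T_conj qconjK /T !qmulA pa -!qmulA apE.
Qed.

Lemma T_right_intertwine q b y : qmul q b = qmul (qi R) q ->
  T q (qconj p) (T b a y) = T (qi R) (qi R) (T q (qconj p) y).
Proof.
move=> qb; have apE : qmul a (qconj p) = qmul (qconj p) (qi R).
  rewrite -[qmul a _]qmul1q -(unit_conj_mulq p_unit) -qmulA (qmulA p) pa.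
  by rewrite -[qmul (qmul _ p) _]qmulA unit_mulq_conj // qmulq1.
by rewrite /T !qmulA qb -!qmulA apE.
Qed.

End Intertwining.

End Quaternions.

Theorem corollary6 (R : realType) (a b : quat R) :
  is_imag a -> unit_norm a -> is_imag b -> unit_norm b ->
  alg_isomorphic
    (cd_twisted_mul (fun x => T a (qconj a) (sigmaH x)) (T b a))
    (cd_twisted_mul (fun x => T (qi R) (qconj (qi R)) (sigmaH x)) (T (qi R) (qi R))).
Proof.
move=> a_im a_unit b_im b_unit.
have [p p_unit pa] := imag_unit_conj_qi a_im a_unit.
have [q q_unit qb] := imag_unit_conj_qi b_im b_unit.
exists (cd_rot p q); apply: cd_rot_twisted_iso => //.
- exact: T_conj_intertwine pa.
- by move=> y; apply: T_right_intertwine.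
Qed.
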